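(* Let $(G,c)$ be a W-state graph, and let $X$ and $X'$ be the vertex sets of the two connected components of the spanning subgraph $G_m=(V(G),E_m(G))$ of monochromatic edges. Then the set of bichromatic edges $E_b(G)$ equals the cut $\delta(X,X')$, the set of edges with one endpoint in $X$ and the other in $X'$.
   Context: Graphs may have parallel edges but no loops. A half-edge $2$-colouring $c$ of $G$ assigns to each pair $(e,w)$ with $w$ an endpoint of edge $e$ a colour in $\{0,1\}$ (0 = blue, 1 = red). An edge $e=uv$ is bichromatic if $c(e,u)\neq c(e,v)$ and monochromatic otherwise; $E_m(G)$, $E_b(G)$ denote the monochromatic and bichromatic edge sets; standing convention: monochromatic edges are blue at both ends. A graph is matching-covered if every edge lies in some perfect matching. A W-state graph is a half-edge $2$-coloured matching-covered graph $(G,c)$ in which every perfect matching contains exactly one bichromatic edge, and every vertex $v$ is incident with an edge $e$ with $c(e,v)=1$. For any W-state graph, $G_m$ has exactly two connected components, each factor-critical (a graph $F$ is factor-critical if $F-u$ has a perfect matching for every vertex $u$). *)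

(* Finite multigraphs: vertex type V, edge type E (parallel
   edges allowed), each edge e has an ordered pair of endpoints [ends e]. *)
From mathcomp Require Import all_boot.
Set Implicit Arguments. Unset Strict Implicit. Unset Printing Implicit Defensive.

Section WState.
Variables (V E : finType) (ends : E -> V * V).

Definition loopless := forall e, (ends e).1 != (ends e).2.

Definition incident (e : E) (w : V) : bool :=
  (w == (ends e).1) || (w == (ends e).2).

Definition perfect_matching (M : {set E}) : bool :=
  [forall v, #|[set e in M | incident e v]| == 1].

Definition matching_covered : Prop :=
  forall e : E, exists M : {set E}, perfect_matching M /\ e \in M.

(* Half-edge 2-colouring: c e w is the colour of the half-edge (e,w);
   only meaningful when w is an endpoint of e. true = 1 = red, false = 0 = blue. *)
Variable c : E -> V -> bool.

Definition bichromatic (e : E) : bool := c e (ends e).1 != c e (ends e).2.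
Definition monochromatic (e : E) : bool := ~~ bichromatic e.

Definition Eb : {set E} := [set e | bichromatic e].
Definition Em : {set E} := [set e | monochromatic e].

Definition mono_blue : Prop :=
  forall e, monochromatic e -> c e (ends e).1 = false /\ c e (ends e).2 = false.

Definition W_state : Prop :=
  [/\ matching_covered,
      (forall M : {set E}, perfect_matching M -> #|M :&: Eb| = 1)
    & (forall v : V, exists e : E, incident e v && c e v)].

Definition mono_adj : rel V :=
  fun u v => [exists e, monochromatic e &&
                ((ends e == (u, v)) || (ends e == (v, u)))].

Definition mono_component (X : {set V}) : Prop :=
  exists x : V, X = [set y | connect mono_adj x y].

Definition cut (X X' : {set V}) : {set E} :=
  [set e | (((ends e).1 \in X) && ((ends e).2 \in X'))
        || (((ends e).1 \in X') && ((ends e).2 \in X))].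

End WState.

(** Monochromatic edges never leave a component of [G_m], so every edge of
    the cut is bichromatic.  Conversely, let [e] be a bichromatic edge inside
    one side [X] and [x'] a vertex on the other side; the red half-edge at
    [x'] lies on a bichromatic edge [g], and [e], [g] lie in perfect matchings
    [Me], [Mg].  Monochromatic edges do not cross [X] and [e] is the only
    bichromatic edge of [Me], so no edge of [Me] crosses [X].  If [g] crosses
    [X], then [Mg] has exactly one crossing edge, and the parity of [#|X|]
    (which is that of the number of crossing edges of any perfect matching)
    is both even and odd.  Otherwise no edge of [Mg] crosses [X] either, and
    [Me] on [X] glued to [Mg] off [X] is a perfect matching containing the
    two bichromatic edges [e] and [g]. *)

From mathcomp Require Import all_boot.

Set Implicit Arguments. Unset Strict Implicit. Unset Printing Implicit Defensive.

Lemma card_set_in_sum (T : finType) (A : {pred T}) (P : pred T) :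
  #|[set x in A | P x]| = \sum_(x in A) (P x : nat).
Proof. by rewrite -sum1dep_card big_mkcondr; apply: eq_bigr => x _; case: (P x). Qed.

Section Matchings.
Variables (V E : finType) (ends : E -> V * V).

Definition crossing (X : {set V}) (h : E) : bool :=
  ((ends h).1 \in X) != ((ends h).2 \in X).

Lemma crossingC X h : crossing (~: X) h = crossing X h.
Proof. by rewrite /crossing !inE; do 2 case: (_ \in X). Qed.

Lemma cut_setC X : cut ends X (~: X) = [set h | crossing X h].
Proof. by apply/setP => h; rewrite !inE /crossing; do 2 case: (_ \in X). Qed.

Lemma noncrossing_incident X h v :
  ~~ crossing X h -> incident ends h v -> (v \in X) = ((ends h).1 \in X).
Proof. by rewrite negbK => /eqP sameX /orP[] /eqP ->. Qed.

Lemma sum_eq_mem (X : {set V}) a : \sum_(v in X) (v == a : nat) = (a \in X).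
Proof.
have [aX | naX] := boolP (a \in X).
  by rewrite (bigD1 a) //= eqxx big1 // => v /andP[_ /negbTE ->].
by rewrite big1 // => v vX; case: eqP => // va; move: naX; rewrite -va vX.
Qed.

Lemma card_perfect_matching (X : {set V}) (M : {set E}) :
  loopless ends -> perfect_matching ends M ->
  #|X| = \sum_(h in M) (((ends h).1 \in X) + ((ends h).2 \in X)).
Proof.
move=> loopG /forallP matchM.
rewrite -sum1_card.
transitivity (\sum_(v in X) \sum_(h in M) (incident ends h v : nat)).
  by apply: eq_bigr => v _; rewrite -(eqP (matchM v)) card_set_in_sum.
rewrite exchange_big; apply: eq_bigr => h _.
rewrite -!sum_eq_mem -big_split; apply: eq_bigr => v _ /=.
by have := loopG h; rewrite /incident; case: (v =P _) => [-> /negbTE -> | _].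
Qed.

Lemma odd_card_crossing (X : {set V}) (M : {set E}) :
  loopless ends -> perfect_matching ends M ->
  odd #|X| = odd #|[set h in M | crossing X h]|.
Proof.
move=> loopG matchM; rewrite (card_perfect_matching X loopG matchM).
rewrite card_set_in_sum !(big_morph odd oddD (erefl : odd 0 = false)).
by apply: eq_bigr => h _; rewrite oddD !oddb /crossing negb_eqb.
Qed.

Definition glue_matchings (X : {set V}) (M1 M2 : {set E}) : {set E} :=
  [set h in M1 | (ends h).1 \in X] :|: [set h in M2 | (ends h).1 \notin X].

Lemma perfect_matching_glue X M1 M2 :
  perfect_matching ends M1 -> perfect_matching ends M2 ->
  {in M1, forall h, ~~ crossing X h} -> {in M2, forall h, ~~ crossing X h} ->
  perfect_matching ends (glue_matchings X M1 M2).
Proof.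
move=> /forallP match1 /forallP match2 inside1 inside2; apply/forallP => v.
suff -> : [set h in glue_matchings X M1 M2 | incident ends h v] =
          [set h in (if v \in X then M1 else M2) | incident ends h v].
  by case: (v \in X); [apply: match1 | apply: match2].
apply/setP => h; rewrite !inE; case vh: (incident ends h v); rewrite ?andbF //.
have sideX : (h \in M1) || (h \in M2) -> ((ends h).1 \in X) = (v \in X).
  by case/orP => [/inside1 | /inside2] /noncrossing_incident ->.
by case vX: (v \in X); case hM1: (h \in M1); case hM2: (h \in M2);
  rewrite /= ?sideX ?hM1 ?hM2 ?vX.
Qed.

End Matchings.

Section WStateGraph.
Variables (V E : finType) (ends : E -> V * V) (c : E -> V -> bool).

Definition mono_closed (X : {set V}) : Prop :=
  forall h, monochromatic ends c h -> ~~ crossing ends X h.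

Lemma mono_closedC X : mono_closed X -> mono_closed (~: X).
Proof. by move=> closedX h /closedX; rewrite crossingC. Qed.

Lemma mono_adj_sym : symmetric (mono_adj ends c).
Proof. by move=> u v; apply/existsP/existsP => -[h adj]; exists h; rewrite orbC. Qed.

Lemma mono_component_closed X : mono_component ends c X -> mono_closed X.
Proof.
move=> [x ->] h monoh; rewrite /crossing !inE negbK.
have adj : mono_adj ends c (ends h).1 (ends h).2.
  by apply/existsP; exists h; rewrite monoh -surjective_pairing eqxx.
by apply/eqP; apply: (connect_closed (sym_connect_sym mono_adj_sym) x adj).
Qed.

Lemma mono_component_neq0 X : mono_component ends c X -> X != set0.
Proof. by move=> [x ->]; apply/set0Pn; exists x; rewrite inE connect0. Qed.

Lemma mono_components_disjoint X X' :
  mono_component ends c X -> mono_component ends c X' -> X != X' ->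
  [disjoint X & X'].
Proof.
move=> [x ->] [x' ->]; apply: contraNT => /pred0Pn[v /andP[]].
rewrite !inE => xv x'v; apply/eqP/setP => y; rewrite !inE.
have connect_symG := sym_connect_sym mono_adj_sym.
by rewrite (same_connect connect_symG xv) (same_connect connect_symG x'v).
Qed.

Hypotheses (loopG : loopless ends) (blueG : mono_blue ends c)
  (wstateG : W_state ends c).

Lemma bichromatic_matching_unique M f h :
  perfect_matching ends M -> f \in M -> h \in M ->
  bichromatic ends c f -> bichromatic ends c h -> h = f.
Proof.
case: wstateG => _ one_bichromatic _ matchM fM hM bf bh.
have [// | hf] := eqVneq h f.
have : #|[set h; f]| <= #|M :&: Eb ends c|.
  by apply/subset_leq_card/subsetP => z; rewrite !inE => /orP[] /eqP ->; apply/andP.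
by rewrite cards2 hf one_bichromatic.
Qed.

Lemma red_half_edge_bichromatic g v :
  incident ends g v -> c g v -> bichromatic ends c g.
Proof.
move=> vg red_gv; have [// | /blueG[blue1 blue2]] := boolP (bichromatic ends c g).
by move: vg red_gv; rewrite /incident => /orP[] /eqP ->; rewrite ?blue1 ?blue2.
Qed.

Lemma matching_crossing_unique X M f h :
  mono_closed X -> perfect_matching ends M -> f \in M -> bichromatic ends c f ->
  h \in M -> crossing ends X h -> h = f.
Proof.
move=> closedX matchM fM bf hM crossh.
apply: (bichromatic_matching_unique matchM) => //.
by apply: contraTT crossh => /closedX.
Qed.

Lemma matching_noncrossing X M f :
  mono_closed X -> perfect_matching ends M -> f \in M -> bichromatic ends c f ->
  ~~ crossing ends X f -> {in M, forall h, ~~ crossing ends X h}.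
Proof.
move=> closedX matchM fM bf ncrossf h hM; apply: contraNN ncrossf => crossh.
by rewrite -(matching_crossing_unique closedX matchM fM bf hM crossh).
Qed.

Lemma bichromatic_inside_setT X e :
  mono_closed X -> bichromatic ends c e ->
  (ends e).1 \in X -> (ends e).2 \in X -> X = setT.
Proof.
move=> closedX be e1X e2X; apply/setP => x'; rewrite inE; apply/negPn/negP => x'X.
case: wstateG => covered _ red.
have [Me [matchMe eMe]] := covered e.
have inside_Me : {in Me, forall h, ~~ crossing ends X h}.
  by apply: (matching_noncrossing closedX matchMe eMe be); rewrite /crossing e1X e2X.
have [g /andP[x'g red_gx']] := red x'.
have bg := red_half_edge_bichromatic x'g red_gx'.
have [Mg [matchMg gMg]] := covered g.
have [crossg | ncrossg] := boolP (crossing ends X g).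
  have crossMe : [set h in Me | crossing ends X h] = set0.
    by apply/setP => h; rewrite !inE; case: (boolP (h \in Me)) => // /inside_Me /negbTE.
  have crossMg : [set h in Mg | crossing ends X h] = [set g].
    apply/setP => h; rewrite !inE; apply/andP/eqP => [[hMg crossh] | -> //].
    exact: matching_crossing_unique closedX matchMg gMg bg hMg crossh.
  have := odd_card_crossing X loopG matchMe.
  by rewrite (odd_card_crossing X loopG matchMg) crossMe crossMg cards0 cards1.
have inside_Mg := matching_noncrossing closedX matchMg gMg bg ncrossg.
have matchM := perfect_matching_glue matchMe matchMg inside_Me inside_Mg.
have g1X : (ends g).1 \notin X by rewrite -(noncrossing_incident ncrossg x'g).
have eM : e \in glue_matchings ends X Me Mg by rewrite !inE eMe e1X.
have gM : g \in glue_matchings ends X Me Mg by rewrite !inE gMg g1X orbT.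
by move: g1X; rewrite (bichromatic_matching_unique matchM eM gM be bg) e1X.
Qed.

Lemma Eb_crossing X :
  mono_closed X -> X != set0 -> X != setT -> Eb ends c = [set h | crossing ends X h].
Proof.
move=> closedX nX0 nXT; apply/setP => e; rewrite !inE; apply/idP/idP => [be | crosse].
  apply: contraT; rewrite /crossing negbK => /eqP sameX.
  have [e1X | e1nX] := boolP ((ends e).1 \in X).
    have e2X : (ends e).2 \in X by rewrite -sameX.
    by move: nXT; rewrite (bichromatic_inside_setT closedX be e1X e2X) eqxx.
  have e1cX : (ends e).1 \in ~: X by rewrite inE.
  have e2cX : (ends e).2 \in ~: X by rewrite inE -sameX.
  move: nX0; rewrite -[X]setCK.
  by rewrite (bichromatic_inside_setT (mono_closedC closedX) be e1cX e2cX) setCT eqxx.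
by apply: contraTT crosse => /closedX.
Qed.

End WStateGraph.

Theorem mainTheorem9 (V E : finType) (ends : E -> V * V) (c : E -> V -> bool)
  (X X' : {set V}) :
  loopless ends ->
  mono_blue ends c ->
  W_state ends c ->
  mono_component ends c X -> mono_component ends c X' -> X != X' ->
  (forall v : V, (v \in X) || (v \in X')) ->
  Eb ends c = cut ends X X'.
Proof.
move=> loopG blueG wstateG compX compX' neqXX' coverXX'.
have disjXX' := mono_components_disjoint compX compX' neqXX'.
have complX : X' = ~: X.
  apply/setP => v; rewrite inE.
  case vX: (v \in X); last by have := coverXX' v; rewrite vX.
  by rewrite (disjointFr disjXX' vX).
rewrite complX cut_setC; apply: Eb_crossing => //.
- exact: mono_component_closed.
- exact: mono_component_neq0 compX.
- apply: contraNneq (mono_component_neq0 compX') => XT.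
  by rewrite complX XT setCT.
Qed.
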